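(* Let $f_1,f_2\in\mathcal{BC}^1_g([a,b],\mathbb F)$. Then $f_1f_2\in\mathcal{BC}^1_g([a,b],\mathbb F)$ if and only if \[(f_1)'_g(t)(f_2)'_g(t)=0\quad\text{for all }t\in((a^*,b)\cap A_g)\setminus H_g,\] where \[A_g=\{t\in\mathbb R: \sup\{s\in [a,b] : g(s)=g(t)\}\in D_g\},\] \[H_g=\{t\in\mathbb R: t\in(s_1,s_2]\text{ for some }s_1,s_2\in D_g\text{ with }(s_1,s_2)\subset C_g\}.\]
   Context: Let $g:\mathbb R\to\mathbb R$ be nondecreasing and left-continuous, $\mathbb F\in\{\mathbb R,\mathbb C\}$. $\Delta g(t)=g(t^+)-g(t)$, $D_g=\{t:\Delta g(t)>0\}$, $C_g=\{t: g\text{ constant on }(t-\varepsilon,t+\varepsilon)\text{ for some }\varepsilon>0\}=\bigcup_{n\in\Lambda}(a_n,b_n)$ (disjoint union of connected components), $N_g^-=\{a_n\}\setminus D_g$, $N_g^+=\{b_n\}\setminus D_g$. Fix $a<b$ with $a\notin N_g^-\cup D_g$ and $b\notin C_g\cup N_g^+\cup D_g$. For $t\in[a,b]$, $t^*=t$ if $t\notin C_g$ and $t^*=b_n$ if $t\in(a_n,b_n)$. The $g$-derivative of $u:[a,b]\to\mathbb F$ at $t$ is $u'_g(t)=\lim_{s\to t}\frac{u(s)-u(t)}{g(s)-g(t)}$ if $t\notin D_g\cup C_g$ and $u'_g(t)=\lim_{s\to t^{*+}}\frac{u(s)-u(t^* )}{g(s)-g(t^* )}$ if $t\in D_g\cup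 C_g$, provided the finite limit exists; limits are over $s\in[a,b]$ with nonzero denominator, and at points of $N_g^+\cup\{a\}$ only the right-hand limit, at points of $N_g^-\cup\{b\}$ only the left-hand limit is taken. A function $u:[a,b]\to\mathbb F$ is $g$-continuous at $t$ if for every $\varepsilon>0$ there is $\delta>0$ with $|u(t)-u(s)|<\varepsilon$ for all $s\in[a,b]$ with $|g(t)-g(s)|<\delta$. $\mathcal{BC}_g([a,b],\mathbb F)$ is the set of bounded functions $[a,b]\to\mathbb F$ that are $g$-continuous at every point of $[a,b]$, and $\mathcal{BC}^1_g([a,b],\mathbb F)$ is the set of $f\in\mathcal{BC}_g([a,b],\mathbb F)$ that are $g$-differentiable at every point of $[a,b]$ with $f'_g\in\mathcal{BC}_g([a,b],\mathbb F)$. *)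

From mathcomp Require Import all_boot all_order all_algebra.
From mathcomp Require Import all_classical all_reals.
From mathcomp.real_closed Require Export complex.
Set Implicit Arguments. Unset Strict Implicit. Unset Printing Implicit Defensive.
Import Order.TTheory GRing.Theory Num.Theory.
Local Open Scope ring_scope.
Local Open Scope classical_set_scope.

Section Stieltjes.
Variable R : realType.
Implicit Types (g : R -> R) (t s : R).

Definition nondecr g := forall x y, x <= y -> g x <= g y.
Definition left_cont g := forall t (e : R), 0 < e ->
  exists2 d : R, 0 < d & forall s, t - d < s < t -> `|g s - g t| < e.

(* g(t^+) : right limit of the nondecreasing g, i.e. inf of g on ]t,+oo[ *)
Definition gplus g t : R := inf [set g s | s in [set s | t < s]].
Definition Deltag g t : R := gplus g t - g t.
Definition Dg g t : Prop := 0 < Deltag g t.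
Definition Cg g t : Prop :=
  exists2 e : R, 0 < e & forall s, t - e < s < t + e -> g s = g t.
(* left endpoints a_n of connected components (a_n,b_n) of C_g with a_n real *)
Definition left_end g t : Prop :=
  ~ Cg g t /\ exists2 c, t < c & forall s, t < s < c -> Cg g s.
(* right endpoints b_n of connected components (a_n,b_n) of C_g with b_n real *)
Definition right_end g t : Prop :=
  ~ Cg g t /\ exists2 c, c < t & forall s, c < s < t -> Cg g s.
Definition Nminus g t : Prop := left_end g t /\ ~ Dg g t.
Definition Nplus g t : Prop := right_end g t /\ ~ Dg g t.

(* t^* : t if t \notin C_g, b_n if t \in (a_n,b_n) *)
Definition tstar g t : R :=
  if `[< Cg g t >] then sup [set s | t <= s /\ forall r, t <= r <= s -> Cg g r]
  else t.

Definition Ag g (a b : R) t : Prop :=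
  Dg g (sup [set s | a <= s <= b /\ g s = g t]).
Definition Hg g t : Prop :=
  exists s1 s2, [/\ Dg g s1, Dg g s2, (forall r, s1 < r < s2 -> Cg g r)
                  & s1 < t <= s2].

Variables (F : numFieldType) (emb : R -> F).
(* emb is the inclusion R -> F (identity if F = R, x |-> x + 0i if F = C) *)
Implicit Types (u : R -> F).

Definition gderiv_at g (a b : R) u t (L : F) : Prop :=
  ((Dg g t \/ Cg g t) ->
     forall e : F, 0 < e -> exists2 d : R, 0 < d & forall s, a <= s <= b ->
       tstar g t < s < tstar g t + d -> g s != g (tstar g t) ->
       `|(u s - u (tstar g t)) / emb (g s - g (tstar g t)) - L| < e)
  /\
  (~ (Dg g t \/ Cg g t) ->
     forall e : F, 0 < e -> exists2 d : R, 0 < d & forall s, a <= s <= b ->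
       `|s - t| < d -> g s != g t ->
       (Nplus g t \/ t = a -> t < s) ->
       (Nminus g t \/ t = b -> s < t) ->
       `|(u s - u t) / emb (g s - g t) - L| < e).

Definition gdifferentiable_at g a b u t : Prop := exists L, gderiv_at g a b u t L.

(* the g-derivative u'_g (t) (the limit is unique at points of [a,b]) *)
Definition gderiv g a b u t : F := xget 0 [set L | gderiv_at g a b u t L].

Definition gcont_at g (a b : R) u t : Prop :=
  forall e : F, 0 < e -> exists2 d : R, 0 < d & forall s, a <= s <= b ->
    `|g t - g s| < d -> `|u t - u s| < e.

Definition BCg g (a b : R) u : Prop :=
  (exists M : F, forall t, a <= t <= b -> `|u t| <= M)
  /\ (forall t, a <= t <= b -> gcont_at g a b u t).

Definition BC1g g (a b : R) u : Prop :=
  [/\ BCg g a b u,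
      (forall t, a <= t <= b -> gdifferentiable_at g a b u t)
    & BCg g a b (gderiv g a b u)].

End Stieltjes.

From mathcomp Require Import all_boot all_order all_algebra.
From mathcomp Require Import all_classical all_reals.
From mathcomp.real_closed Require Import complex.
From mathcomp Require Import ring lra.
Import Order.TTheory GRing.Theory Num.Theory.
Local Open Scope ring_scope.
Local Open Scope classical_set_scope.
Set Implicit Arguments. Unset Strict Implicit. Unset Printing Implicit Defensive.

(* Writing Q u s = (u s - u t^* ) / (g s - g t^* ) for the g-difference
   quotient at t, one has
     Q (f1 f2) = Q f1 (f2 t^* + Q f2 (g s - g t^* )) + f1 t^* Q f2,
   and g s - g t^* tends to Δg(t^* ), so with p := (f1)'_g (f2)'_g
     (f1 f2)'_g t = (f1)'_g t f2 t + f1 t (f2)'_g t + p t Δg(t^* ).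
   The first two terms are g-continuous, hence f1 f2 is in BC^1_g iff
   p Δg(.^* ) is g-continuous on [a, b].
   For t in S = ((a^*, b) ∩ A_g) \ H_g, the level set of g through t ends at a
   jump point β = β^*, and g takes values g s arbitrarily close below g t, where
   Δg(s^* ) <= g t - g s is small; g-continuity at β forces p β Δg(β) = 0, so
   p t = p β = 0.  Conversely, if p vanishes on S, then at each t either
   p t = 0; or Δg(t^* ) = 0 and Δg(s^* ) -> 0 as g s -> g t (a jump on the level
   of t would put t in S); or Δg(t^* ) > 0 and t is not in S, and then all
   points g-close to t share its level and its t^*. *)

Lemma pos_le_min (R : realDomainType) (x y : R) : 0 < x -> 0 < y ->
  exists m : R, [/\ 0 < m, m <= x & m <= y].
Proof.
move=> x0 y0; exists (Order.min x y).
by rewrite lt_min x0 y0 ge_min lexx ge_min lexx orbT.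
Qed.

Lemma eq0_of_norm_lt (F : numFieldType) (x : F) :
  (forall e, 0 < e -> `|x| < e) -> x = 0.
Proof.
move=> H; apply/eqP; rewrite -normr_le0; apply/ler_addgt0Pr => e /H/ltW.
by rewrite add0r.
Qed.

(** * Limits along a monotone base *)

Section TendsAlong.
Variables (R : realType) (F : numFieldType).
Implicit Types (B : R -> R -> Prop) (h : R -> F).

(* Limits along a family of point sets [B d], [d > 0], shrinking with [d]:
   a filter base in the shape of the point sets used by the g-derivative. *)
Definition tends_along B h (L : F) := forall e : F, 0 < e ->
  exists2 d : R, 0 < d & forall s, B d s -> `|h s - L| < e.

Definition monotone_base B := forall d d' s, d <= d' -> B d s -> B d' s.

Lemma base_and B (Q1 Q2 : R -> Prop) : monotone_base B ->
  (exists2 d : R, 0 < d & forall s, B d s -> Q1 s) ->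
  (exists2 d : R, 0 < d & forall s, B d s -> Q2 s) ->
  exists2 d : R, 0 < d & forall s, B d s -> Q1 s /\ Q2 s.
Proof.
move=> mB [d1 d10 H1] [d2 d20 H2].
have [m [m0 m1 m2]] := pos_le_min d10 d20.
by exists m => // s Bs; split; [apply: H1 | apply: H2]; apply: mB Bs.
Qed.

Lemma tends_along_cst B (c : F) : tends_along B (fun=> c) c.
Proof. by move=> e e0; exists 1 => // s _; rewrite subrr normr0. Qed.

Lemma eq_tends_along B h1 h2 L : (forall d s, B d s -> h1 s = h2 s) ->
  tends_along B h1 L -> tends_along B h2 L.
Proof.
move=> E H e /H[d d0 Hd]; exists d => // s Bs.
by rewrite -(E d s Bs); apply: Hd.
Qed.

Lemma tends_alongN B h L : tends_along B h L -> tends_along B (fun s => - h s) (- L).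
Proof. by move=> H e /H[d d0 Hd]; exists d => // s /Hd; rewrite -opprD normrN. Qed.

Section MonotoneBase.
Variable B : R -> R -> Prop.
Hypothesis mB : monotone_base B.

Lemma tends_alongD h1 h2 L1 L2 : tends_along B h1 L1 -> tends_along B h2 L2 ->
  tends_along B (fun s => h1 s + h2 s) (L1 + L2).
Proof.
move=> H1 H2 e e0; have e20 : 0 < e / 2 by rewrite divr_gt0.
have [d d0 Hd] := base_and mB (H1 _ e20) (H2 _ e20).
exists d => // s /Hd[A1 A2].
rewrite opprD addrACA (le_lt_trans (ler_normD _ _)) //.
by rewrite [e](splitr e) ltrD.
Qed.

Lemma tends_alongM h1 h2 L1 L2 : tends_along B h1 L1 -> tends_along B h2 L2 ->
  tends_along B (fun s => h1 s * h2 s) (L1 * L2).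
Proof.
move=> H1 H2 e e0.
set c1 := `|L1| + 1; set c2 := `|L2| + 1.
have c10 : 0 < c1 by rewrite ltr_wpDl.
have c20 : 0 < c2 by rewrite ltr_wpDl.
have [d d0 Hd] := base_and mB (H1 (e / 2 / c2) ltac:(by rewrite !divr_gt0))
  (base_and mB (H2 (e / 2 / c1) ltac:(by rewrite !divr_gt0)) (H2 _ ltr01)).
exists d => // s /Hd[A1 [A2 A3]].
have -> : h1 s * h2 s - L1 * L2 = (h1 s - L1) * h2 s + L1 * (h2 s - L2) by ring.
rewrite (le_lt_trans (ler_normD _ _)) // [e](splitr e) !normrM.
have h2_le : `|h2 s| <= c2.
  rewrite -[h2 s](subrK L2) (le_trans (ler_normD _ _)) // addrC lerD2l.
  exact: ltW.
apply: ler_ltD.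
  rewrite -[e / 2](divfK (lt0r_neq0 c20)).
  by apply: ler_pM => //; exact: ltW.
apply: le_lt_trans (ler_wpM2l (normr_ge0 _) (ltW A2)) _.
rewrite -[X in _ < X](divfK (lt0r_neq0 c10)) [X in _ < X]mulrC.
by rewrite ltr_pM2r ?ltrDl ?divr_gt0.
Qed.

Lemma tends_along_unique h L L' : (forall d, 0 < d -> exists s, B d s) ->
  tends_along B h L -> tends_along B h L' -> L = L'.
Proof.
move=> proper H1 H2; apply/eqP; rewrite -subr_eq0.
apply: contraT; rewrite -normr_gt0 => ne.
have e0 : 0 < `|L - L'| / 2 by rewrite divr_gt0.
have [d d0 Hd] := base_and mB (H1 _ e0) (H2 _ e0).
have [s /Hd[A1 A2]] := proper d d0.
have : `|L - L'| < `|L - L'| / 2 + `|L - L'| / 2.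
  apply: le_lt_trans (ltrD A1 A2); rewrite [X in _ <= X]addrC.
  have -> : L - L' = (h s - L') - (h s - L) by ring.
  exact: ler_normB.
by rewrite -splitr ltxx.
Qed.

End MonotoneBase.
End TendsAlong.

(** * Jumps, constancy intervals and t^* *)

Section NondecreasingLeftContinuous.
Variables (R : realType) (g : R -> R).
Hypotheses (ndg : nondecr g) (lcg : left_cont g).

Lemma gright_neq0 x : [set g s | s in [set s | x < s]] !=set0.
Proof. by exists (g (x + 1)); exists (x + 1) => //=; rewrite ltrDl. Qed.

Lemma le_gplus x : g x <= gplus g x.
Proof.
by apply: lb_le_inf (gright_neq0 x) _ => _ [s /= /ltW xs <-]; apply: ndg.
Qed.

Lemma gplus_le x y : x < y -> gplus g x <= g y.
Proof.
move=> xy; apply: ge_inf; last by exists y.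
by exists (g x) => _ [s /= /ltW xs <-]; apply: ndg.
Qed.

Lemma gplus_approx x e : 0 < e -> exists2 y, x < y & g y < gplus g x + e.
Proof.
move=> e0; have : gplus g x < gplus g x + e by rewrite ltrDl.
by case/(inf_lt (gright_neq0 x)) => _ [y /= xy <-]; exists y.
Qed.

Lemma Deltag_ge0 x : 0 <= Deltag g x.
Proof. by rewrite subr_ge0 le_gplus. Qed.

Lemma gplus_notDg x : ~ Dg g x -> gplus g x = g x.
Proof.
rewrite /Dg /Deltag subr_gt0 => /negP; rewrite -leNgt => le_gx.
by apply/eqP; rewrite eq_le le_gx le_gplus.
Qed.

Lemma Dg_level_le x s : Dg g x -> g s = g x -> s <= x.
Proof.
rewrite /Dg /Deltag subr_gt0 => Dx gsx; rewrite leNgt; apply/negP => /gplus_le.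
by rewrite gsx leNgt Dx.
Qed.

Lemma Deltag_small_right x eta : 0 < eta -> exists2 eps : R, 0 < eps &
  forall z, x < z -> gplus g x < g z < gplus g x + eps -> Deltag g z < eta.
Proof.
move=> eta0.
have [[y [xy /andP[y1 y2]]]|] :=
  pselect (exists y, x < y /\ gplus g x < g y < gplus g x + eta); last first.
  by move=> N; exists eta => // z xz k; exfalso; apply: N; exists z.
exists (g y - gplus g x) => [|z xz /andP[z1 z2]]; first by rewrite subr_gt0.
have zy : z < y by rewrite ltNge; apply/negP => /ndg; lra.
have := gplus_le zy; rewrite /Deltag; lra.
Qed.

Lemma Cg_of_const x y c : (forall r, x < r < y -> g r = c) ->
  forall r, x < r < y -> Cg g r.
Proof.
move=> H r /andP[xr ry].
have [m [m0 mx my]] := pos_le_min (ltac:(by rewrite subr_gt0) : 0 < r - x)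
  (ltac:(by rewrite subr_gt0) : 0 < y - r).
by exists m => // s /andP[s1 s2]; rewrite !H //; apply/andP; split; lra.
Qed.

Lemma Dg_notCg x : Dg g x -> ~ Cg g x.
Proof.
rewrite /Dg /Deltag subr_gt0 => Dx [e e0 He].
have := @gplus_le x (x + e / 2) ltac:(lra).
by rewrite He ?leNgt ?Dx //; apply/andP; split; lra.
Qed.

Lemma g_left_const c s v : c < s -> (forall r, c < r < s -> g r = v) -> g s = v.
Proof.
move=> cs H; apply/eqP; rewrite -subr_eq0; apply: contraT; rewrite -normr_gt0.
case/(lcg s)=> d d0 Hd.
have [m [m0 md mc]] := pos_le_min d0 (ltac:(by rewrite subr_gt0) : 0 < s - c).
have := Hd (s - m / 2) ltac:(apply/andP; split; lra).
by rewrite H 1?distrC ?ltxx //; apply/andP; split; lra.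
Qed.

Lemma Cg_interval_const x y : (forall r, x < r < y -> Cg g r) ->
  forall r1 r2, x < r1 -> r1 <= r2 -> r2 < y -> g r1 = g r2.
Proof.
move=> HC r1 r2 xr1 r12 r2y.
pose S := [set s | r1 <= s <= r2 /\ g s = g r1].
have S0 : S !=set0 by exists r1; rewrite /S /= lexx r12.
have S_ub : ubound S r2 by move=> s [/andP[_ ?] _].
have ub_sup := ub_le_sup (ex_intro _ r2 S_ub : has_ubound S).
have r1_sup : r1 <= sup S by apply: ub_sup; rewrite /S /= lexx r12.
have sup_r2 : sup S <= r2 := ge_sup S0 S_ub.
have [e e0 He] := HC (sup S) ltac:(apply/andP; split; lra).
have [s Ss ss] := sup_gt S0 (ltac:(lra) : sup S - e < sup S).
have g_sup : g (sup S) = g r1.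
  case: (Ss) => _ <-; symmetry; apply: He.
  by have := ub_sup s Ss; move=> ?; apply/andP; split; lra.
have [lt|] := ltP (sup S) r2; last by move=> ?; rewrite -g_sup; congr g; lra.
have [m [m0 me mr]] := pos_le_min (ltac:(lra) : 0 < e / 2)
  (ltac:(by rewrite subr_gt0) : 0 < r2 - sup S).
have : S (sup S + m).
  split; first by apply/andP; split; lra.
  by rewrite -g_sup He //; apply/andP; split; lra.
by move/ub_sup; lra.
Qed.

Definition Cg_exit t z := [/\ t <= z, forall r, t <= r < z -> Cg g r & ~ Cg g z].

Lemma Cg_exit_le t z b : Cg_exit t z -> t <= b -> ~ Cg g b -> z <= b.
Proof.
by case=> _ HC _ tb Cb; rewrite leNgt; apply/negP => bz; apply/Cb/HC; rewrite tb.
Qed.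

Lemma Cg_exit_unique t z z' : Cg_exit t z -> Cg_exit t z' -> z = z'.
Proof.
move=> ez ez'; case: (ez) => tz _ Cz; case: (ez') => tz' _ Cz'.
by apply/eqP; rewrite eq_le (Cg_exit_le ez tz' Cz') (Cg_exit_le ez' tz Cz).
Qed.

Lemma g_Cg_exit t z : Cg_exit t z -> g z = g t.
Proof.
case=> tz HC Cz; have [tz'|] := ltP t z; last by move=> zt; congr g; lra.
have [e e0 He] := HC t ltac:(by rewrite lexx).
apply: g_left_const tz' _ => r /andP[tr rz]; symmetry.
apply: (@Cg_interval_const (t - e) z) => //; try lra.
move=> r' /andP[r1 r2]; have [r't|tr'] := ltP r' t; last by apply: HC; rewrite tr'.
by apply: (Cg_of_const He); apply/andP; split; lra.
Qed.

Lemma tstar_notCg t : ~ Cg g t -> tstar g t = t.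
Proof. by move=> Ct; rewrite /tstar asboolF. Qed.

Lemma tstar_Dg t : Dg g t -> tstar g t = t.
Proof. by move/Dg_notCg/tstar_notCg. Qed.

Lemma tstar_Cg_exit t b : t <= b -> ~ Cg g b -> Cg_exit t (tstar g t).
Proof.
move=> tb Cb; have [Ct|Ct] := pselect (Cg g t); last first.
  by rewrite tstar_notCg //; split => // r; lra.
rewrite /tstar asboolT //; set S := [set s | _ ].
have S_ub : ubound S b.
  by move=> s [ts H]; rewrite leNgt; apply/negP => bs; apply/Cb/H; lra.
have St : S t by split => // r rt; have -> : r = t by lra.
have ub_sup := ub_le_sup (ex_intro _ b S_ub : has_ubound S).
have HC : forall r, t <= r < sup S -> Cg g r.
  move=> r /andP[tr]; case/(sup_gt (ex_intro _ t St)) => s [_ Hs] rs.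
  by apply: Hs; apply/andP; split; lra.
split=> //; first exact: ub_sup.
move=> [e e0 He]; have : S (sup S + e / 2).
  split=> [|r /andP[tr rs]]; first by have := ub_sup t St; lra.
  have [lt|ge] := ltP r (sup S); first by apply: HC; rewrite tr.
  by apply: (Cg_of_const He); apply/andP; split; lra.
by move/ub_sup; lra.
Qed.

Lemma tstar_eq t z : Cg_exit t z -> tstar g t = z.
Proof.
by move=> ez; case: (ez) => tz _ Cz; apply: Cg_exit_unique (tstar_Cg_exit tz Cz) ez.
Qed.

Lemma left_end_of_const t c : t < c -> (forall r, t < r < c -> g r = g t) ->
  ~ Cg g t -> left_end g t.
Proof. by move=> tc H Ct; split=> //; exists c => //; apply: Cg_of_const H. Qed.

Lemma right_end_of_const c t : c < t -> (forall r, c < r < t -> g r = g t) ->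
  ~ Cg g t -> right_end g t.
Proof. by move=> ct H Ct; split=> //; exists c => //; apply: Cg_of_const H. Qed.

Lemma left_right_end_Cg t : left_end g t -> right_end g t -> ~ Dg g t -> Cg g t.
Proof.
move=> [_ [c tc HCr]] [_ [c' ct HCl]] /gplus_notDg gpt.
have gl : forall r, c' < r < t -> g r = g t.
  move=> r /andP[r1 r2]; symmetry; apply: g_left_const r2 _ => q /andP[q1 q2].
  by symmetry; apply: (Cg_interval_const HCl); lra.
have gr : forall r, t < r < c -> g r = g t.
  move=> r /andP[r1 r2]; apply/eqP; rewrite eq_le (ndg (ltW r1)) andbT -gpt.
  apply: lb_le_inf (gright_neq0 t) _ => _ [y /= ty <-].
  have [yr|ry] := leP y r; last exact/ndg/ltW.
  by rewrite (Cg_interval_const HCr ty yr r2).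
apply: (@Cg_of_const c' c (g t)); last by rewrite ct tc.
move=> r /andP[r1 r2]; case: (ltgtP r t) => [rt|tr|->] //.
  by apply: gl; rewrite r1 rt.
by apply: gr; rewrite tr r2.
Qed.

Lemma tstar_jump_interval s1 s2 t : Dg g s2 -> (forall r, s1 < r < s2 -> Cg g r) ->
  s1 < t <= s2 -> tstar g t = s2.
Proof.
move=> D2 HC /andP[s1t ts2]; apply: tstar_eq; split=> //; last exact: Dg_notCg.
by move=> r /andP[tr rs2]; apply: HC; rewrite rs2 andbT; lra.
Qed.

Lemma Hg_Dg_tstar t : Hg g t -> Dg g (tstar g t).
Proof. by move=> [s1 [s2 [_ D2 HC ht]]]; rewrite (tstar_jump_interval D2 HC ht). Qed.

Lemma const_right_notDg z c : z < c -> (forall r, z < r < c -> g r = g z) ->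
  ~ Dg g z.
Proof.
rewrite /Dg /Deltag subr_gt0 => zc H.
by have := @gplus_le z ((z + c) / 2) ltac:(lra); rewrite H ?leNgt //; lra.
Qed.

Lemma exists_right_change t c : t < c -> ~ Nminus g t -> ~ Dg g t -> ~ Cg g t ->
  exists s, t < s < c /\ g s != g t.
Proof.
move=> tc nN nD nC; apply: contrapT => N; apply: nN; split=> //.
apply: left_end_of_const tc _ nC => r rtc; apply/eqP; apply: contraT => ne.
by case: N; exists r.
Qed.

Lemma exists_left_change c t : c < t -> ~ Nplus g t -> ~ Dg g t -> ~ Cg g t ->
  exists s, c < s < t /\ g s != g t.
Proof.
move=> ct nN nD nC; apply: contrapT => N; apply: nN; split=> //.
apply: right_end_of_const ct _ nC => r rct; apply/eqP; apply: contraT => ne.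
by case: N; exists r.
Qed.

Variables (a b : R).
Hypotheses (ab : a < b) (nNa : ~ Nminus g a) (nDa : ~ Dg g a)
  (nCb : ~ Cg g b) (nNb : ~ Nplus g b) (nDb : ~ Dg g b).

Lemma a_in_ab : a <= a <= b.
Proof. by rewrite lexx ltW. Qed.

Lemma tstar_exit t : a <= t <= b -> Cg_exit t (tstar g t).
Proof. by case/andP=> _ tb; apply: tstar_Cg_exit tb nCb. Qed.

Lemma le_tstar t : a <= t <= b -> t <= tstar g t.
Proof. by case/tstar_exit. Qed.

Lemma tstar_le t : a <= t <= b -> tstar g t <= b.
Proof. by move=> ht; apply: Cg_exit_le (tstar_exit ht) _ nCb; case/andP: ht. Qed.

Lemma tstar_in t : a <= t <= b -> a <= tstar g t <= b.
Proof.
by move=> ht; rewrite tstar_le // andbT (le_trans _ (le_tstar ht)) //; case/andP: ht.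
Qed.

Lemma g_tstar t : a <= t <= b -> g (tstar g t) = g t.
Proof. by move/tstar_exit/g_Cg_exit. Qed.

Lemma notCg_tstar t : a <= t <= b -> ~ Cg g (tstar g t).
Proof. by case/tstar_exit. Qed.

Lemma lt_tstar_Cg t : a <= t <= b -> Cg g t -> t < tstar g t.
Proof.
move=> ht Ct; case: (tstar_exit ht) => tz _ Cz.
by rewrite lt_neqAle tz andbT; apply/eqP => E; rewrite -E in Cz.
Qed.

Lemma tstar_lt_Cg t : a <= t <= b -> Cg g t -> tstar g t < b.
Proof.
move=> ht Ct; have tz := lt_tstar_Cg ht Ct; case: (tstar_exit ht) => _ HC Cz.
rewrite lt_neqAle tstar_le // andbT; apply/eqP => zb; apply: nNb; split=> //.
split=> //; rewrite -zb; exists t => // r /andP[tr rz].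
by apply: HC; rewrite rz (ltW tr).
Qed.

Lemma Deltag_tstar_b : Deltag g (tstar g b) = 0.
Proof.
rewrite tstar_notCg //; apply/eqP; rewrite eq_le Deltag_ge0 andbT.
by rewrite leNgt; apply/negP.
Qed.

Lemma Deltag_tstar_le t : a <= t <= b -> Deltag g (tstar g t) <= g (b + 1) - g a.
Proof.
move=> ht; have /andP[az zb] := tstar_in ht.
have := @gplus_le (tstar g t) (b + 1) ltac:(lra); have := ndg az; rewrite /Deltag; lra.
Qed.

Lemma Deltag_tstar_below s t : a <= s <= b -> g s < g t ->
  Deltag g (tstar g s) <= g t - g s.
Proof.
move=> hs lt; have gz := g_tstar hs.
have zt : tstar g s < t by rewrite ltNge; apply/negP => /ndg; lra.
by have := gplus_le zt; rewrite /Deltag; lra.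
Qed.

Lemma Deltag_tstar_small_above t : a <= t <= b -> Deltag g (tstar g t) = 0 ->
  forall eta, 0 < eta -> exists2 eps, 0 < eps & forall s, a <= s <= b ->
  g t < g s < g t + eps -> Deltag g (tstar g s) < eta.
Proof.
move=> ht D0 eta /(Deltag_small_right (tstar g t))[eps eps0 He].
have gp : gplus g (tstar g t) = g t by move: D0; rewrite /Deltag g_tstar //; lra.
exists eps => // s hs /andP[s1 s2]; apply: He; last by rewrite gp g_tstar // s1 s2.
have gz := g_tstar ht; rewrite ltNge; apply/negP => /ndg.
by have := le_tstar hs; move/ndg; lra.
Qed.

Lemma le_tstar_a_tstar t : a <= t <= tstar g a -> tstar g t = tstar g a.
Proof.
case/andP=> at1 ta.
have [Ca|Ca] := pselect (Cg g a); last first.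
  by have -> : t = a by move: ta; rewrite tstar_notCg //; lra.
case: (tstar_exit a_in_ab) => _ HC Cz; apply: tstar_eq; split=> // r /andP[tr rz].
by apply: HC; rewrite rz; lra.
Qed.

Lemma const_le_tstar_a z : (forall r, a <= r <= z -> g r = g a) -> z <= tstar g a.
Proof.
move=> H.
have [za|az] := leP z a; first by apply: le_trans za (le_tstar a_in_ab).
have Hopen : forall r, a < r < z -> g r = g a.
  by move=> r /andP[r1 r2]; apply: H; apply/andP; split; lra.
have HC := Cg_of_const Hopen.
have [Ca|Ca] := pselect (Cg g a); last first.
  by exfalso; apply: nNa; split=> //; apply: left_end_of_const az Hopen Ca.
rewrite leNgt; apply/negP => zlt; apply: (notCg_tstar a_in_ab).
by apply: HC; rewrite zlt lt_tstar_Cg // a_in_ab.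
Qed.

Lemma Dg_level_a_tstar z : g z = g a -> Dg g z -> a <= z -> z = tstar g a.
Proof.
move=> gz Dz az.
have za : tstar g a <= z by apply: Dg_level_le Dz _; rewrite (g_tstar a_in_ab) gz.
apply/eqP; rewrite eq_le za andbT.
by apply: const_le_tstar_a => r /andP[r1 r2]; have := ndg r1; have := ndg r2; lra.
Qed.

(** * Level sets of g in [a, b] *)

Local Notation level t := [set s | a <= s <= b /\ g s = g t].

Lemma level_sup t : a <= t <= b ->
  [/\ t <= sup (level t), sup (level t) <= b & g (sup (level t)) = g t].
Proof.
move=> ht; have L0 : level t !=set0 by exists t.
have L_ub : ubound (level t) b by move=> s [/andP[_ ?] _].
have t_sup : t <= sup (level t) by apply: ub_le_sup; [exists b | ].
split=> //; first exact: ge_sup.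
have [lt|] := ltP t (sup (level t)); last by move=> ?; congr g; lra.
apply: g_left_const lt _ => r /andP[tr rs].
have [l [_ gl] rl] := sup_gt L0 rs.
by have := ndg (ltW tr); have := ndg (ltW rl); lra.
Qed.

Lemma level_sup_Dg t x : a <= x <= b -> g x = g t -> Dg g x -> sup (level t) = x.
Proof.
move=> hx gx Dx; have L0 : level t !=set0 by exists x.
have L_ub : ubound (level t) x by move=> s [_ gs]; apply: Dg_level_le; rewrite // gs.
by apply/eqP; rewrite eq_le ge_sup //= ub_le_sup //; exists x.
Qed.

Lemma level_inf t : a <= t <= b ->
  [/\ a <= inf (level t), inf (level t) <= t
    & forall r, inf (level t) < r <= t -> g r = g t].
Proof.
move=> ht; have L0 : level t !=set0 by exists t.
have L_lb : lbound (level t) a by move=> s [/andP[? _] _].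
split; [exact: lb_le_inf | by apply: ge_inf; [exists a|] |].
move=> r /andP[r1 r2]; have [l [_ gl] lr] := inf_lt L0 r1.
by have := ndg (ltW lr); have := ndg r2; lra.
Qed.

Lemma level_inf_g t : a <= t <= b -> Ag g a b t -> ~ Hg g t ->
  g (inf (level t)) = g t.
Proof.
move=> ht At nH; have [a_inf inf_t Hr] := level_inf ht.
have L0 : level t !=set0 by exists t.
apply/eqP; rewrite eq_le (ndg inf_t) /= leNgt; apply/negP => lt; apply: nH.
exists (inf (level t)), (sup (level t)); split=> //.
- rewrite /Dg /Deltag subr_gt0 (lt_le_trans lt) //.
  apply: lb_le_inf (gright_neq0 _) _ => _ [y /= ty <-].
  by have [yt|/ltW/ndg //] := leP y t; rewrite Hr // ty.
- move=> r /andP[r1 r2].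
  have [l1 [_ gl1] lr1] := inf_lt L0 r1; have [l2 [_ gl2] lr2] := sup_gt L0 r2.
  apply: (@Cg_of_const l1 l2 (g t)); last by rewrite lr1.
  by move=> q /andP[/ltW/ndg q1 /ltW/ndg q2]; lra.
- have [t_sup _ _] := level_sup ht; rewrite t_sup andbT lt_neqAle inf_t andbT.
  by apply/eqP => E; rewrite E ltxx in lt.
Qed.

Definition Sg t := [/\ tstar g a < t < b, Ag g a b t & ~ Hg g t].

Lemma Sg_in t : Sg t -> a <= t <= b.
Proof.
by case=> /andP[at1 /ltW ->]; rewrite andbT (le_trans (le_tstar a_in_ab) (ltW at1)).
Qed.

Lemma Sg_of_level_jump t s : a <= t <= b -> Deltag g (tstar g t) = 0 ->
  a <= s <= b -> g s = g t -> Dg g (tstar g s) -> Sg t.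
Proof.
move=> ht D0 hs gst Dz; have /andP[az zb] := tstar_in hs.
have gz : g (tstar g s) = g t by rewrite g_tstar.
have sup_z : sup (level t) = tstar g s by apply: level_sup_Dg; rewrite ?az.
have nDt : ~ Dg g (tstar g t) by rewrite /Dg D0 ltxx.
split=> [||/Hg_Dg_tstar //]; last by rewrite /Ag sup_z.
have [t_sup _ _] := level_sup ht; case/andP: (ht) => at1 tb.
apply/andP; split.
  rewrite ltNge; apply/negP => ta.
  have tt := le_tstar_a_tstar (ltac:(by rewrite at1 ta) : a <= t <= tstar g a).
  have gta : g t = g a.
    have := g_tstar a_in_ab.
    by rewrite -tt g_tstar //; have := ndg at1; lra.
  by apply: nDt; rewrite tt -(@Dg_level_a_tstar (tstar g s)) // gz.
rewrite lt_neqAle tb andbT; apply/eqP => tb'; apply: nDb.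
by have -> : b = tstar g s by lra.
Qed.

Definition g_locally_level t := exists2 d : R, 0 < d & forall s, a <= s <= b ->
  `|g t - g s| < d -> g s = g t /\ tstar g s = tstar g t.

Lemma near_level_le_tstar t s : a <= t <= b ->
  `|g t - g s| < Deltag g (tstar g t) -> s <= tstar g t.
Proof.
move=> ht near; rewrite leNgt; apply/negP => /gplus_le.
move: near; rewrite /Deltag g_tstar // distrC.
by have := ler_norm (g s - g t); lra.
Qed.

Lemma locally_level_le_tstar_a t : a <= t <= tstar g a ->
  0 < Deltag g (tstar g t) -> g_locally_level t.
Proof.
move=> ht Dt.
have ht' : a <= t <= b.
  by case/andP: ht => -> ta; rewrite (le_trans ta (tstar_le a_in_ab)).
exists (Deltag g (tstar g t)) => // s hs near.
have sz := near_level_le_tstar ht' near; rewrite le_tstar_a_tstar // in sz.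
have zs : tstar g s = tstar g t.
  by rewrite !le_tstar_a_tstar // sz andbT; case/andP: hs.
by split=> //; rewrite -(g_tstar hs) zs g_tstar.
Qed.

Lemma locally_level_Hg t : a <= t <= b -> Hg g t -> g_locally_level t.
Proof.
move=> ht Ht; have Dt := Hg_Dg_tstar Ht.
case: Ht => s1 [s2 [D1 D2 HC t12]]; have zt := tstar_jump_interval D2 HC t12.
have [m [m0 m1 m2]] := pos_le_min D1 Dt.
exists m => // s hs near.
have sz := near_level_le_tstar ht (lt_le_trans near m2); rewrite zt in sz.
have s1s : s1 < s.
  rewrite ltNge; apply/negP => /ndg ss1; case/andP: t12 => /gplus_le s1t _.
  by move: near m1; rewrite /Deltag; have := ler_norm (g t - g s); lra.
have zs : tstar g s = s2 by apply: tstar_jump_interval D2 HC _; rewrite s1s.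
by split; rewrite ?zs -?zt // -(g_tstar hs) zs -zt g_tstar.
Qed.

Lemma locally_level_notSg t : a <= t <= b -> 0 < Deltag g (tstar g t) ->
  ~ Sg t -> g_locally_level t.
Proof.
move=> ht Dt nS; have [Ht|nH] := pselect (Hg g t); first exact: locally_level_Hg.
apply: locally_level_le_tstar_a => //; case/andP: (ht) => -> tb /=.
rewrite leNgt; apply/negP => at1; apply: nS; split=> //.
  rewrite at1 lt_neqAle tb andbT; apply/eqP => tb'.
  by move: Dt; rewrite tb' Deltag_tstar_b ltxx.
by rewrite /Ag (@level_sup_Dg t (tstar g t)) ?tstar_in ?g_tstar.
Qed.

Lemma Sg_approach_below t : Sg t -> forall d, 0 < d ->
  exists s, a <= s <= b /\ g t - d < g s < g t.
Proof.
move=> St d d0; have ht := Sg_in St; case: St => /andP[at1 _] At nH.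
have [a_inf inf_t Hr] := level_inf ht; have g_inf := level_inf_g ht At nH.
have a_lt_inf : a < inf (level t).
  rewrite lt_neqAle a_inf andbT; apply/eqP => E.
  have : t <= tstar g a.
    apply: const_le_tstar_a => r /andP[r1 r2].
    by have := ndg r1; have := ndg r2; rewrite -E in g_inf; lra.
  by rewrite leNgt at1.
case/(lcg (inf (level t))): d0 => dl dl0 Hd.
have [m [m0 m1 m2]] :=
  pos_le_min dl0 (ltac:(by rewrite subr_gt0) : 0 < inf (level t) - a).
have [s s_def] : exists s, s = inf (level t) - m / 2 by eexists.
have hs : a <= s <= b by apply/andP; split; lra.
have gs_le : g s <= g t by rewrite -g_inf; apply: ndg; lra.
have gs_neq : g s != g t.
  apply/eqP => gst; have : inf (level t) <= s.
    by apply: ge_inf; [exists a => y [/andP[]] | split].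
  lra.
exists s; split=> //; have := Hd s ltac:(apply/andP; split; lra).
rewrite g_inf distrC ger0_norm ?subr_ge0 // => gs_near.
by rewrite [X in _ && X]lt_neqAle gs_neq gs_le andbT; lra.
Qed.

(** * The base of the g-derivative *)

Lemma tstar_lt_DC t : a <= t <= b -> Dg g t \/ Cg g t -> tstar g t < b.
Proof.
move=> ht [Dt|]; last exact: tstar_lt_Cg.
rewrite tstar_Dg // lt_neqAle; case/andP: ht => _ ->; rewrite andbT.
by apply/eqP => tb; apply: nDb; rewrite -tb.
Qed.

Definition right_base t d s :=
  [/\ a <= s <= b, tstar g t < s < tstar g t + d & g s != g (tstar g t)].

Definition two_sided_base t d s := [/\ a <= s <= b, `|s - t| < d, g s != g t,
  (Nplus g t \/ t = a -> t < s) & (Nminus g t \/ t = b -> s < t)].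

Lemma approach_tstar_right t : a <= t <= b -> Dg g t \/ Cg g t ->
  forall d, 0 < d -> exists s, right_base t d s.
Proof.
move=> ht DC d d0; have zb := tstar_lt_DC ht DC; have /andP[az _] := tstar_in ht.
have [m [m0 md mb]] := pos_le_min d0 (ltac:(by rewrite subr_gt0) : 0 < b - tstar g t).
apply: contrapT => N.
have Hc : forall s, tstar g t < s < tstar g t + m -> g s = g (tstar g t).
  move=> s /andP[s1 s2]; apply/eqP; apply: contraT => ne; case: N; exists s.
  by split=> //; apply/andP; split; lra.
have nDz := const_right_notDg (ltac:(lra) : tstar g t < tstar g t + m) Hc.
case: DC => [Dt|Ct]; first by apply: nDz; rewrite tstar_Dg.
apply: (notCg_tstar ht); have tz := lt_tstar_Cg ht Ct.
apply: (@Cg_of_const t (tstar g t + m) (g (tstar g t))); last by rewrite tz /=; lra.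
move=> r /andP[r1 r2]; have [rz|zr] := leP r (tstar g t); last by apply: Hc; rewrite zr.
by have := ndg (ltW r1); have := ndg rz; rewrite g_tstar //; lra.
Qed.

Lemma approach_two_sided t : a <= t <= b -> ~ (Dg g t \/ Cg g t) ->
  forall d, 0 < d -> exists s, two_sided_base t d s.
Proof.
move=> /andP[at1 tb] nDC d d0.
have nD : ~ Dg g t by move=> ?; apply: nDC; left.
have nC : ~ Cg g t by move=> ?; apply: nDC; right.
have right : t < b -> ~ Nminus g t -> exists s, two_sided_base t d s.
  move=> tb' nN.
  have [m [m0 md mb]] := pos_le_min d0 (ltac:(by rewrite subr_gt0) : 0 < b - t).
  have [s [/andP[s1 s2] gs]] := exists_right_change (ltac:(lra) : t < t + m) nN nD nC.
  exists s; split=> //; first by apply/andP; split; lra.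
    by rewrite gtr0_norm; lra.
  by case=> [/nN|?] //; lra.
have left : a < t -> ~ Nplus g t -> exists s, two_sided_base t d s.
  move=> at' nN.
  have [m [m0 md ma]] := pos_le_min d0 (ltac:(by rewrite subr_gt0) : 0 < t - a).
  have [s [/andP[s1 s2] gs]] := exists_left_change (ltac:(lra) : t - m < t) nN nD nC.
  exists s; split=> //; first by apply/andP; split; lra.
    by rewrite ltr0_norm; lra.
  by case=> [/nN|?] //; lra.
have [ta|at'] := leP t a.
  have ta' : t = a by lra.
  by apply: right; rewrite ta'.
have [bt|tb'] := leP b t.
  have tb'' : t = b by lra.
  by apply: left; rewrite tb''.
have [Nm|nNm] := pselect (Nminus g t); last exact: right.
have [Np|nNp] := pselect (Nplus g t); last exact: left.
by exfalso; apply/nC/left_right_end_Cg; [case: Nm | case: Np |].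
Qed.

Definition gbase t :=
  if `[< Dg g t \/ Cg g t >] then right_base t else two_sided_base t.

Lemma gbase_mono t : monotone_base (gbase t).
Proof.
rewrite /gbase; case: asboolP => _ d d' s dd'.
  by case=> hs /andP[s1 s2] gs; split=> //; apply/andP; split; lra.
by case=> hs st gs N1 N2; split=> //; lra.
Qed.

Lemma gbase_proper t : a <= t <= b -> forall d, 0 < d -> exists s, gbase t d s.
Proof.
rewrite /gbase => ht; case: asboolP => DC.
  exact: approach_tstar_right.
exact: approach_two_sided.
Qed.

Lemma gbase_neq t d s : gbase t d s -> g s != g (tstar g t).
Proof.
rewrite /gbase; case: asboolP => DC; first by case.
by rewrite tstar_notCg => [[]|Ct] //; apply: DC; right.
Qed.

(** * g-derivatives, g-continuity and the product rule *)

(* [emb] stands for the inclusion of R into F = R or C; only these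
   properties of it are used. *)
Variables (F : numFieldType) (emb : R -> F).
Hypotheses (emb_sub : forall x y, emb (x - y) = emb x - emb y)
  (emb_norm : forall x, `|emb x| = emb `|x|)
  (emb_lt : forall x y, x < y -> emb x < emb y)
  (emb_small : forall e : F, 0 < e -> exists2 r : R, 0 < r & emb r <= e).

Lemma emb0 : emb 0 = 0.
Proof. by rewrite -(subrr 0) emb_sub subrr. Qed.

Lemma emb_le x y : x <= y -> emb x <= emb y.
Proof. by rewrite le_eqVlt => /predU1P[->|/emb_lt/ltW]. Qed.

Lemma emb_ge0 x : 0 <= x -> 0 <= emb x.
Proof. by rewrite -emb0; apply: emb_le. Qed.

Lemma emb_neq0 x : x != 0 -> emb x != 0.
Proof. by rewrite -normr_gt0 => /emb_lt; rewrite emb0 -emb_norm normr_gt0. Qed.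

Definition gquot (u : R -> F) t s :=
  (u s - u (tstar g t)) / emb (g s - g (tstar g t)).

Lemma gderiv_atE u t L :
  gderiv_at emb g a b u t L <-> tends_along (gbase t) (gquot u t) L.
Proof.
rewrite /gbase; case: asboolP => DC; split.
- by case=> /(_ DC) H _ e /H[d d0 Hd]; exists d => // s [hs st gs]; apply: Hd.
- by move=> H; split=> // _ e /H[d d0 Hd]; exists d => // s hs st gs; apply: Hd.
- rewrite /gquot tstar_notCg => [|Ct]; last by apply: DC; right.
  by case=> _ /(_ DC) H e /H[d d0 Hd]; exists d => // s [? ? ? ? ?]; apply: Hd.
- rewrite /gquot tstar_notCg => [H|Ct]; last by apply: DC; right.
  by split=> // _ e /H[d d0 Hd]; exists d => // s ? ? ? ? ?; apply: Hd.
Qed.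

Lemma tends_along_gincr t : tends_along (gbase t)
  (fun s => emb (g s - g (tstar g t))) (emb (Deltag g (tstar g t))).
Proof.
move=> e /emb_small[r r0 re]; rewrite /gbase; case: asboolP => DC.
  have [y zy gy] := gplus_approx (tstar g t) r0.
  exists (y - tstar g t); first by rewrite subr_gt0.
  move=> s [_ /andP[s1 s2] _]; rewrite -emb_sub emb_norm.
  apply: lt_le_trans re; apply: emb_lt.
  have sy : s <= y by move: s2; rewrite addrC subrK => /ltW.
  rewrite /Deltag opprB subrKA ger0_norm ?subr_ge0 ?gplus_le // ltrBlDl.
  exact: le_lt_trans (ndg sy) gy.
have nD : ~ Dg g t by move=> ?; apply: DC; left.
rewrite tstar_notCg => [|Ct]; last by apply: DC; right.
rewrite /Deltag gplus_notDg // subrr emb0.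
have [y ty gy] := gplus_approx t r0; rewrite gplus_notDg // in gy.
case/(lcg t): r0 => dl dl0 Hd.
have [m [m0 m1 m2]] := pos_le_min dl0 (ltac:(by rewrite subr_gt0) : 0 < y - t).
exists m => // s [_ st _ _ _]; rewrite subr0 emb_norm.
apply: lt_le_trans re; apply: emb_lt.
have [lt|ge] := ltP s t.
  by apply: Hd; move: st; rewrite ltr0_norm ?subr_lt0 //; lra.
move: st; rewrite ger0_norm ?subr_ge0 // => st.
rewrite ger0_norm ?subr_ge0 ?ndg // ltrBlDl (le_lt_trans _ gy) //.
by apply: ndg; lra.
Qed.

Lemma gderiv_atM u v t L1 L2 :
  gderiv_at emb g a b u t L1 -> gderiv_at emb g a b v t L2 ->
  gderiv_at emb g a b (fun s => u s * v s) t
    (L1 * (v (tstar g t) + L2 * emb (Deltag g (tstar g t))) + u (tstar g t) * L2).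
Proof.
rewrite !gderiv_atE => H1 H2; have mB := @gbase_mono t.
apply: (@eq_tends_along _ _ _ (fun s => gquot u t s * (v (tstar g t)
    + gquot v t s * emb (g s - g (tstar g t))) + u (tstar g t) * gquot v t s)).
  move=> d s /gbase_neq; rewrite -subr_eq0 => /emb_neq0 nz.
  by rewrite /gquot; field.
apply: tends_alongD => //; last exact: tends_alongM (tends_along_cst _ _) H2.
apply: tends_alongM H1 (tends_alongD mB (tends_along_cst _ _) _) => //.
exact: tends_alongM H2 (tends_along_gincr t).
Qed.

Lemma gderiv_unique u t L : a <= t <= b -> gderiv_at emb g a b u t L ->
  gderiv emb g a b u t = L.
Proof.
move=> ht H; have := xgetI 0 H; rewrite /gderiv !gderiv_atE in H *.
by move/(tends_along_unique (@gbase_mono t) (gbase_proper ht) H).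
Qed.

Lemma gderiv_of_differentiable u t : gdifferentiable_at emb g a b u t ->
  gderiv_at emb g a b u t (gderiv emb g a b u t).
Proof. by case=> L /(xgetI 0). Qed.

Definition gnbhs t d s := a <= s <= b /\ `|g t - g s| < d.

Lemma gnbhs_mono t : monotone_base (gnbhs t).
Proof. by move=> d d' s dd' [hs gs]; split=> //; lra. Qed.

Lemma gcont_atE (u : R -> F) t : gcont_at g a b u t <-> tends_along (gnbhs t) u (u t).
Proof.
by split=> H e /H[d d0 Hd]; exists d => // s; [case=> hs gs | move=> hs gs];
  rewrite distrC; apply: Hd.
Qed.

Lemma gcont_at_level (u : R -> F) t s : gcont_at g a b u t -> a <= s <= b ->
  g s = g t -> u s = u t.
Proof.
move=> H hs gs; apply/eqP; rewrite -subr_eq0; apply/eqP/eq0_of_norm_lt => e /H[d d0].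
by rewrite distrC; apply; rewrite // gs subrr normr0.
Qed.

Lemma BCg_eq (u v : R -> F) : (forall t, a <= t <= b -> u t = v t) ->
  BCg g a b u -> BCg g a b v.
Proof.
move=> E [[M HM] Cu]; split=> [|t ht e /(Cu t ht)[d d0 Hd]].
  by exists M => t ht; rewrite -E ?HM.
by exists d => // s hs gs; rewrite -!E //; apply: Hd.
Qed.

Lemma BCgD (u v : R -> F) : BCg g a b u -> BCg g a b v ->
  BCg g a b (fun t => u t + v t).
Proof.
move=> [[M1 H1] C1] [[M2 H2] C2]; split.
  by exists (M1 + M2) => t ht; rewrite (le_trans (ler_normD _ _)) // lerD ?H1 ?H2.
move=> t ht; apply/gcont_atE/tends_alongD; first exact: gnbhs_mono.
  exact/gcont_atE/C1.
exact/gcont_atE/C2.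
Qed.

Lemma BCgN (u : R -> F) : BCg g a b u -> BCg g a b (fun t => - u t).
Proof.
move=> [[M H] C]; split; first by exists M => t ht; rewrite normrN H.
by move=> t ht; apply/gcont_atE/tends_alongN/gcont_atE/C.
Qed.

Lemma BCgM (u v : R -> F) : BCg g a b u -> BCg g a b v ->
  BCg g a b (fun t => u t * v t).
Proof.
move=> [[M1 H1] C1] [[M2 H2] C2]; split.
  by exists (M1 * M2) => t ht; rewrite normrM ler_pM ?H1 ?H2.
move=> t ht; apply/gcont_atE/tends_alongM; first exact: gnbhs_mono.
  exact/gcont_atE/C1.
exact/gcont_atE/C2.
Qed.

Lemma emb_Deltag_tstar_le t : a <= t <= b ->
  emb (Deltag g (tstar g t)) <= emb (g (b + 1) - g a).
Proof. by move/Deltag_tstar_le/emb_le. Qed.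

(** * g-continuity of p Δg(t^* ) *)

Definition weighted_jump (p : R -> F) t := p t * emb (Deltag g (tstar g t)).

Section WeightedJump.
Variable p : R -> F.
Hypothesis Bp : BCg g a b p.

Let B := g (b + 1) - g a.

Lemma weighted_jump_bounded :
  exists M : F, forall t, a <= t <= b -> `|weighted_jump p t| <= M.
Proof.
have [[M HM] _] := Bp; exists (M * emb B) => t ht.
rewrite normrM emb_norm (ger0_norm (Deltag_ge0 _)).
apply: ler_pM; [exact: normr_ge0 | exact: emb_ge0 (Deltag_ge0 _) | exact: HM |].
exact: emb_Deltag_tstar_le.
Qed.

Lemma weighted_jump_small e : 0 < e -> exists2 r : R, 0 < r &
  forall s, a <= s <= b -> Deltag g (tstar g s) < r -> `|weighted_jump p s| < e.
Proof.
move=> e0; have [[M HM] _] := Bp.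
have M1 : 0 < M + 1.
  by rewrite ltr_wpDl // (le_trans _ (HM a a_in_ab)).
have [r r0 Hr] := emb_small (divr_gt0 e0 M1).
exists r => // s hs /emb_lt Ds.
rewrite normrM emb_norm (ger0_norm (Deltag_ge0 _)).
have eD0 := emb_ge0 (Deltag_ge0 (tstar g s)).
apply: (@le_lt_trans _ _ ((M + 1) * emb (Deltag g (tstar g s)))).
  by apply: ler_pM => //; rewrite (le_trans (HM s hs)) // lerDl.
apply: (@lt_le_trans _ _ ((M + 1) * emb r)); first by rewrite ltr_pM2l.
by rewrite mulrC -ler_pdivlMr.
Qed.

Lemma weighted_jump_small_near_Sg t : Sg t -> forall e d, 0 < e -> 0 < d ->
  exists s, [/\ a <= s <= b, `|g t - g s| < d & `|weighted_jump p s| < e].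
Proof.
move=> St e d e0 d0; have [r r0 Hr] := weighted_jump_small e0.
have [m [m0 md mr]] := pos_le_min d0 r0.
have [s [hs /andP[s1 s2]]] := Sg_approach_below St m0.
have Ds := Deltag_tstar_below hs s2.
by exists s; split=> //; [rewrite ger0_norm; lra | apply: Hr => //; lra].
Qed.

Lemma vanish_of_gcont_weighted_jump :
  (forall t, a <= t <= b -> gcont_at g a b (weighted_jump p) t) ->
  forall t, Sg t -> p t = 0.
Proof.
move=> Hk t St; have ht := Sg_in St; case: (St) => _ At _.
have [t_sup sup_b g_sup] := level_sup ht; move: At; rewrite /Ag.
set β := sup _ in t_sup sup_b g_sup * => Dβ.
have hβ : a <= β <= b by rewrite sup_b andbT (le_trans _ t_sup) //; case/andP: ht.
have kβ : weighted_jump p β = 0.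
  apply: eq0_of_norm_lt => e e0; have e2 : 0 < e / 2 by rewrite divr_gt0.
  have [d d0 Hd] := Hk β hβ _ e2.
  have [s [hs gs ks]] := weighted_jump_small_near_Sg St e2 d0.
  have kβs : `|weighted_jump p β - weighted_jump p s| < e / 2.
    by apply: Hd; rewrite ?g_sup.
  rewrite [e]splitr (le_lt_trans _ (ltrD kβs ks)) //.
  by rewrite -{1}(subrK (weighted_jump p s) (weighted_jump p β)) ler_normD.
have pβ : p β = 0.
  move: kβ => /eqP; rewrite /weighted_jump tstar_Dg // mulf_eq0 => /orP[/eqP //|].
  by rewrite (negbTE (emb_neq0 (lt0r_neq0 Dβ))).
by rewrite -(gcont_at_level (Bp.2 t ht) hβ g_sup).
Qed.

Lemma gcont_weighted_jump_vanish t : a <= t <= b -> p t = 0 ->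
  gcont_at g a b (weighted_jump p) t.
Proof.
move=> ht pt e e0.
have c0 : 0 < emb B + 1.
  by rewrite ltr_wpDl // (le_trans (emb_ge0 (Deltag_ge0 _)) (emb_Deltag_tstar_le ht)).
have [d d0 Hd] := Bp.2 t ht _ (divr_gt0 e0 c0).
exists d => // s hs /(Hd s hs); rewrite /weighted_jump pt !mul0r !sub0r !normrN => ps.
rewrite normrM emb_norm (ger0_norm (Deltag_ge0 _)).
apply: (@le_lt_trans _ _ (`|p s| * (emb B + 1))); last by rewrite -ltr_pdivlMr.
by rewrite ler_wpM2l // (le_trans (emb_Deltag_tstar_le hs)) // lerDl.
Qed.

Lemma gcont_weighted_jump_Deltag0 t : a <= t <= b -> Deltag g (tstar g t) = 0 ->
  ~ Sg t -> gcont_at g a b (weighted_jump p) t.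
Proof.
move=> ht D0 nS e /weighted_jump_small[r r0 Hr].
have [eps eps0 He] := Deltag_tstar_small_above ht D0 r0.
have [m [m0 mr meps]] := pos_le_min r0 eps0.
exists m => // s hs near; rewrite /weighted_jump D0 emb0 mulr0 sub0r normrN.
have [lt|gt|eq] := ltgtP (g s) (g t); apply: Hr => //.
- have := Deltag_tstar_below hs lt.
  by move: near; rewrite ger0_norm; lra.
- apply: He => //; move: near; rewrite ler0_norm; last lra.
  by move=> ?; apply/andP; split; lra.
- suff -> : Deltag g (tstar g s) = 0 by [].
  apply/eqP; rewrite eq_le Deltag_ge0 andbT leNgt; apply/negP => Dz; apply: nS.
  exact: Sg_of_level_jump hs eq Dz.
Qed.

Lemma gcont_weighted_jump_level t : a <= t <= b -> g_locally_level t ->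
  gcont_at g a b (weighted_jump p) t.
Proof.
move=> ht [d d0 Hd] e e0; exists d => // s hs /(Hd s hs)[gs zs].
by rewrite /weighted_jump zs (gcont_at_level (Bp.2 t ht) hs gs) subrr normr0.
Qed.

Lemma gcont_weighted_jump : (forall t, Sg t -> p t = 0) ->
  forall t, a <= t <= b -> gcont_at g a b (weighted_jump p) t.
Proof.
move=> vanish t ht; have [St|nS] := pselect (Sg t).
  by apply: gcont_weighted_jump_vanish; rewrite ?vanish.
have [D0|Dt] := eqVneq (Deltag g (tstar g t)) 0.
  exact: gcont_weighted_jump_Deltag0.
apply/gcont_weighted_jump_level/locally_level_notSg => //.
by rewrite lt_neqAle eq_sym Dt Deltag_ge0.
Qed.

End WeightedJump.

Lemma BCg_tstar (f : R -> F) t : BCg g a b f -> a <= t <= b -> f (tstar g t) = f t.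
Proof.
by move=> [_ Cf] ht; apply: gcont_at_level (Cf t ht) (tstar_in ht) (g_tstar ht).
Qed.

Theorem BC1gM_iff (f1 f2 : R -> F) :
  BC1g emb g a b f1 -> BC1g emb g a b f2 ->
  (BC1g emb g a b (fun t => f1 t * f2 t) <->
   (forall t, tstar g a < t < b -> Ag g a b t -> ~ Hg g t ->
      gderiv emb g a b f1 t * gderiv emb g a b f2 t = 0)).
Proof.
move=> [B1 Df1 Bd1] [B2 Df2 Bd2].
set d1 := gderiv emb g a b f1; set d2 := gderiv emb g a b f2.
have Df12 t : a <= t <= b -> gderiv_at emb g a b (fun s => f1 s * f2 s) t
    (d1 t * (f2 (tstar g t) + d2 t * emb (Deltag g (tstar g t)))
     + f1 (tstar g t) * d2 t).
  by move=> ht; apply: gderiv_atM; apply: gderiv_of_differentiable;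
    [apply: Df1 | apply: Df2].
have d12E t : a <= t <= b -> gderiv emb g a b (fun s => f1 s * f2 s) t =
    (d1 t * f2 t + f1 t * d2 t) + weighted_jump (fun s => d1 s * d2 s) t.
  move=> ht; rewrite (gderiv_unique ht (Df12 t ht)) /weighted_jump.
  by rewrite !BCg_tstar //; ring.
have B_lin : BCg g a b (fun t => d1 t * f2 t + f1 t * d2 t) by apply: BCgD; apply: BCgM.
have B_p : BCg g a b (fun t => d1 t * d2 t) by apply: BCgM.
split=> [[_ _ B12] t ht At nH | vanish].
  apply: (vanish_of_gcont_weighted_jump B_p) => //.
  suff [] : BCg g a b (weighted_jump (fun s => d1 s * d2 s)) by [].
  apply: BCg_eq (BCgD B12 (BCgN B_lin)) => s hs.
  by rewrite d12E //; ring.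
split; [exact: BCgM | by move=> t ht; eexists; apply: Df12 |].
apply: BCg_eq (BCgD B_lin _) => [s hs|]; first by rewrite d12E.
split; first exact: weighted_jump_bounded.
by apply: (gcont_weighted_jump B_p) => t [ht At nH]; apply: vanish.
Qed.

End NondecreasingLeftContinuous.

Theorem theorem5p7 (R : realType) (g : R -> R) (a b : R) :
  nondecr g -> left_cont g -> a < b ->
  ~ Nminus g a -> ~ Dg g a ->
  ~ Cg g b -> ~ Nplus g b -> ~ Dg g b ->
  (forall f1 f2 : R -> R,
     BC1g id g a b f1 -> BC1g id g a b f2 ->
     (BC1g id g a b (fun t => f1 t * f2 t) <->
      (forall t, tstar g a < t < b -> Ag g a b t -> ~ Hg g t ->
         gderiv id g a b f1 t * gderiv id g a b f2 t = 0)))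
  /\
  (forall f1 f2 : R -> R[i],
     BC1g (real_complex R) g a b f1 -> BC1g (real_complex R) g a b f2 ->
     (BC1g (real_complex R) g a b (fun t => f1 t * f2 t) <->
      (forall t, tstar g a < t < b -> Ag g a b t -> ~ Hg g t ->
         gderiv (real_complex R) g a b f1 t *
         gderiv (real_complex R) g a b f2 t = 0))).
Proof.
move=> ndg lcg ab nNa nDa nCb nNb nDb; split=> f1 f2.
  apply: BC1gM_iff => // e e0; exact: (ex_intro2 _ _ e).
apply: BC1gM_iff => //.
- by move=> x y; rewrite rmorphB.
- by move=> x; rewrite normc_def /= expr0n /= addr0 sqrtr_sqr.
- by move=> x y; rewrite ltcR.
- move=> e; rewrite ltcE /= => /andP[/eqP Ie Re0].
  by exists (complex.Re e) => //; rewrite lecE /= Ie eqxx lexx.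
Qed.
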